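(* Let $S$ be a semigroup generated by a set $A$ and let $T$ be a subsemigroup of $S$ generated by a set $B$ and having finite Green index $n$ in $S$. Let $s\in S$ and $a_1,\ldots,a_{m+k}\in A$, and suppose that the elements $sa_1\cdots a_{m+1}, sa_1\cdots a_{m+2},\ldots, sa_1\cdots a_{m+k}$ together lie in at least $n$ distinct $\mathcal{R}^T$-classes. Then there exist $i$ with $m<i\le m+k$ and $b_1,\ldots,b_j\in B$ such that $sa_1\cdots a_i=b_1\cdots b_j$.
   Context: For a subsemigroup $T$ of a semigroup $S$, the relative Green's relations on $S$ are: $u\,\mathcal{R}^T v$ iff $uT^1=vT^1$, $u\,\mathcal{L}^T v$ iff $T^1u=T^1v$, and $\mathcal{H}^T=\mathcal{R}^T\cap\mathcal{L}^T$, where $T^1=T\cup\{1\}$. The Green index of $T$ in $S$ is one plus the number of $\mathcal{H}^T$-classes contained in $S\setminus T$. *)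

From Stdlib Require Import List Arith.
Import ListNotations.

Section Semigroups.
Variable (S : Type) (mul : S -> S -> S).

Definition associative_op : Prop :=
  forall x y z : S, mul x (mul y z) = mul (mul x y) z.

Definition wprod (x0 : S) (xs : list S) : S := fold_left mul xs x0.

Definition generates_S (A : S -> Prop) : Prop :=
  forall x : S, exists a0 as_, A a0 /\ Forall A as_ /\ x = wprod a0 as_.

Definition subsemigroup (T : S -> Prop) : Prop :=
  forall x y, T x -> T y -> T (mul x y).

Definition generates_sub (T B : S -> Prop) : Prop :=
  (forall b, B b -> T b) /\
  (forall x, T x -> exists b0 bs, B b0 /\ Forall B bs /\ x = wprod b0 bs).

(* membership in u T^1 and T^1 u *)
Definition in_uT1 (T : S -> Prop) (u x : S) : Prop :=
  x = u \/ exists t, T t /\ x = mul u t.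
Definition in_T1u (T : S -> Prop) (u x : S) : Prop :=
  x = u \/ exists t, T t /\ x = mul t u.

Definition relR (T : S -> Prop) (u v : S) : Prop :=
  forall x, in_uT1 T u x <-> in_uT1 T v x.
Definition relL (T : S -> Prop) (u v : S) : Prop :=
  forall x, in_T1u T u x <-> in_T1u T v x.
Definition relH (T : S -> Prop) (u v : S) : Prop := relR T u v /\ relL T u v.

(* T has Green index n in S: n = 1 + number of H^T-classes contained in S \ T.
   The classes are counted via a complete, irredundant list of representatives.
   (Every H^T-class lies either inside T or inside S \ T.) *)
Definition green_index (T : S -> Prop) (n : nat) : Prop :=
  exists reps : list S,
    n = Datatypes.S (length reps) /\
    Forall (fun r => ~ T r) reps /\
    (forall i j, i < length reps -> j < length reps -> i <> j ->
       forall d, ~ relH T (nth i reps d) (nth j reps d)) /\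
    (forall x, ~ T x -> exists r, In r reps /\ relH T x r).

End Semigroups.

Arguments associative_op {S} mul.
Arguments wprod {S} mul x0 xs.
Arguments generates_S {S} mul A.
Arguments subsemigroup {S} mul T.
Arguments generates_sub {S} mul T B.
Arguments in_uT1 {S} mul T u x.
Arguments in_T1u {S} mul T u x.
Arguments relR {S} mul T u v.
Arguments relL {S} mul T u v.
Arguments relH {S} mul T u v.
Arguments green_index {S} mul T n.

(* Prefixes lying outside T lie in H^T-classes of S \ T, of which there are n - 1; since
   H^T is finer than R^T, pairwise R^T-inequivalent elements of S \ T lie in distinct
   H^T-classes, so there are at most n - 1 of them.  Hence among n pairwise
   R^T-inequivalent prefixes one lies in T, and B generates T. *)
From Stdlib Require Import List Arith Lia Classical.
Import ListNotations.

Lemma Forall2_nth {X Y : Type} (R : X -> Y -> Prop) (xs : list X) (ys : list Y)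
    (dx : X) (dy : Y) (i : nat) :
  Forall2 R xs ys -> i < length xs -> R (nth i xs dx) (nth i ys dy).
Proof.
  intros HR; revert i; induction HR as [|x y xs ys Hxy _ IH]; intros [|i] Hi;
    simpl in *; try lia; auto.
  apply IH; lia.
Qed.

Section RelativeGreen.
Variables (S : Type) (mul : S -> S -> S) (T : S -> Prop).

Lemma relH_same_rep_relR (x y r : S) :
  relH mul T x r -> relH mul T y r -> relR mul T x y.
Proof.
  intros [Hxr _] [Hyr _] z; rewrite (Hxr z), (Hyr z); tauto.
Qed.

Lemma green_index_separated_lt (n : nat) (xs : list S) (d : S) :
  green_index mul T n ->
  Forall (fun x => ~ T x) xs ->
  (forall p q, p < length xs -> q < length xs -> p <> q ->
     ~ relR mul T (nth p xs d) (nth q xs d)) ->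
  length xs < n.
Proof.
  intros [reps [-> [_ [_ Hcover]]]] Hout Hsep.
  assert (Hrep : Forall (fun x => Exists (relH mul T x) reps) xs).
  { apply Forall_impl with (2 := Hout); intros x Hx.
    apply Exists_exists, Hcover, Hx. }
  destruct (Forall_Exists_exists_Forall2 _ Hrep) as [rs [Hxs_rs Hincl]].
  assert (Hlen : length xs = length rs) by exact (Forall2_length Hxs_rs).
  assert (Hnodup : NoDup rs).
  { apply (NoDup_nth rs d); intros p q Hp Hq Hpq.
    rewrite <- Hlen in Hp, Hq.
    destruct (Nat.eq_dec p q) as [|Hne]; [assumption | exfalso].
    apply (Hsep p q Hp Hq Hne), relH_same_rep_relR with (r := nth q rs d).
    - rewrite <- Hpq; exact (Forall2_nth _ _ _ d d p Hxs_rs Hp).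
    - exact (Forall2_nth _ _ _ d d q Hxs_rs Hq). }
  pose proof (NoDup_incl_length Hnodup Hincl); lia.
Qed.

End RelativeGreen.

Theorem mainTheorem16
  (S : Type) (mul : S -> S -> S) (Hassoc : associative_op mul)
  (A : S -> Prop) (HA : generates_S mul A)
  (T : S -> Prop) (HT : subsemigroup mul T)
  (B : S -> Prop) (HB : generates_sub mul T B)
  (n : nat) (Hn : green_index mul T n)
  (s : S) (m k : nat) (a : list S)
  (Ha_len : length a = m + k) (Ha_A : Forall A a)
  (Hclasses : exists idx : list nat,
      length idx = n /\
      Forall (fun i => m < i <= m + k) idx /\
      (forall p q, p < length idx -> q < length idx -> p <> q ->
         ~ relR mul T (fold_left mul (firstn (nth p idx 0) a) s)
                      (fold_left mul (firstn (nth q idx 0) a) s))) :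
  exists i, m < i <= m + k /\
    exists b0 bs, B b0 /\ Forall B bs /\
      fold_left mul (firstn i a) s = wprod mul b0 bs.
Proof.
  destruct Hclasses as [idx [Hlen [Hrange Hsep]]].
  set (prefix := fun i => fold_left mul (firstn i a) s).
  apply NNPP; intro Hnone.
  assert (Hout : Forall (fun x => ~ T x) (map prefix idx)).
  { apply Forall_map, Forall_impl with (2 := Hrange); intros i Hi HTi.
    apply Hnone; exists i; split; [exact Hi | exact (proj2 HB _ HTi)]. }
  assert (Hsep' : forall p q, p < length (map prefix idx) -> q < length (map prefix idx) ->
            p <> q -> ~ relR mul T (nth p (map prefix idx) (prefix 0))
                                   (nth q (map prefix idx) (prefix 0))).
  { intros p q; rewrite length_map, !map_nth; apply Hsep. }
  pose proof (green_index_separated_lt S mul T n _ _ Hn Hout Hsep') as Hlt.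
  rewrite length_map in Hlt; lia.
Qed.
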